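(* Let $f=f(u,v)$ be a generalized timelike minimal surface with real Weierstrass data $(g_1,g_2,\hat{\omega}_1du,\hat{\omega}_2dv)$. Then: (i) a point $p$ satisfies $df_p=\mathbf{0}$ if and only if $\hat{\omega}_1(p)=\hat{\omega}_2(p)=0$; (ii) if $p$ is a singular point with $df_p=\mathbf 0$, then $f$ is a front at $p$ if and only if $g_1g_2(p)\neq1$ and $(g_1)_u(g_2)_v(p)\neq0$.
   Context: $\mathbb{L}^3$ is $\mathbb{R}^3$ with the Lorentzian metric $-dt^2+dx^2+dy^2$. A generalized timelike minimal surface is a non-constant smooth map $f\colon\Sigma\to\mathbb{L}^3$ from a 2-manifold which is an immersion on an open dense subset and such that near each point there are local coordinates $(u,v)$ with $\langle f_u,f_u\rangle=\langle f_v,f_v\rangle=0$ and $f_{uv}=0$. In such coordinates $f(u,v)=\tfrac12\int_{u_0}^u(-1-g_1^2,1-g_1^2,2g_1)\hat{\omega}_1du+\tfrac12\int_{v_0}^v(1+g_2^2,1-g_2^2,-2g_2)\hat{\omega}_2dv+f(u_0,v_0)$, with $g_1,\hat\omega_1$ functions of $u$ and $g_2,\hat\omega_2$ functions of $v$ (real Weierstrass data). Standing assumption: $g_1,g_2$ take finite real values at every singular point (point where $f$ is not an immersion). Such $f$ is a frontal with unit normal $n=(g_1+g_2,-g_1+g_2,1+g_1g_2)/\sqrt{(1-g_1g_2)^2+2(g_1+g_2)^2}$ (Euclidean-orthogonal to $df$); $f$ is a front at $p$ if $(f,n)$ is an immersion at $p$. *)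

From Stdlib Require Import Reals Lra.
From Coquelicot Require Import Coquelicot.
Open Scope R_scope.

(** Vectors of R^3 = L^3 (coordinates (t,x,y)) and R^6, with Coquelicot's
    product normed-module structure. *)
Definition V3 : Type := (R * R * R)%type.
Definition mkV3 (a b c : R) : V3 := (a, b, c).

Definition lin_indep {V : ModuleSpace R_Ring} (a b : V) : Prop :=
  forall s t : R, plus (scal s a) (scal t b) = zero -> s = 0 /\ t = 0.

Definition smooth_on (U : R -> Prop) (h : R -> R) : Prop :=
  forall (k : nat) (x : R), U x -> ex_derive_n h k x.

Definition has_du {V : NormedModule R_AbsRing} (F : R -> R -> V) (u v : R) (a : V) : Prop :=
  is_derive (fun x => F x v) u a.
Definition has_dv {V : NormedModule R_AbsRing} (F : R -> R -> V) (u v : R) (a : V) : Prop :=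
  is_derive (fun y => F u y) v a.

Definition df_zero (f : R -> R -> V3) (u v : R) : Prop :=
  has_du f u v zero /\ has_dv f u v zero.

Definition immersion_at {V : NormedModule R_AbsRing} (F : R -> R -> V) (u v : R) : Prop :=
  exists a b : V, has_du F u v a /\ has_dv F u v b /\ lin_indep a b.

Definition fu_W (g1 w1 : R -> R) (u : R) : V3 :=
  mkV3 ((-1 - g1 u ^ 2) * w1 u / 2) ((1 - g1 u ^ 2) * w1 u / 2) (2 * g1 u * w1 u / 2).
Definition fv_W (g2 w2 : R -> R) (v : R) : V3 :=
  mkV3 ((1 + g2 v ^ 2) * w2 v / 2) ((1 - g2 v ^ 2) * w2 v / 2) (- 2 * g2 v * w2 v / 2).

(** f : I x J -> L^3 is a generalized timelike minimal surface with real
    Weierstrass data (g1, w1 du, g2, w2 dv) in the null coordinates (u,v),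
    where I, J are open subsets of R:
    - g1, w1 smooth on I (functions of u), g2, w2 smooth on J (functions of v);
    - f is given by the Weierstrass formula, i.e. its partial derivatives are
      the integrands above (equivalently f = the integral formula + const on
      each connected component);
    - f is an immersion on an open dense subset of I x J (the set of regular
      points, which is open, is dense). *)
Definition gen_timelike_minimal_W (I J : R -> Prop) (g1 w1 g2 w2 : R -> R)
    (f : R -> R -> V3) : Prop :=
  open I /\ open J /\
  smooth_on I g1 /\ smooth_on I w1 /\ smooth_on J g2 /\ smooth_on J w2 /\
  (forall u v, I u -> J v -> has_du f u v (fu_W g1 w1 u) /\ has_dv f u v (fv_W g2 w2 v)) /\
  (forall u v, I u -> J v -> forall eps : R, 0 < eps ->
     exists u' v', I u' /\ J v' /\ Rabs (u' - u) < eps /\ Rabs (v' - v) < eps /\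
       immersion_at f u' v') /\
  (exists u1 v1 u2 v2, I u1 /\ J v1 /\ I u2 /\ J v2 /\ f u1 v1 <> f u2 v2).

Definition normal_W (g1 g2 : R -> R) (u v : R) : V3 :=
  let a := g1 u in let b := g2 v in
  let d := sqrt ((1 - a * b) ^ 2 + 2 * (a + b) ^ 2) in
  mkV3 ((a + b) / d) ((- a + b) / d) ((1 + a * b) / d).

Definition singular_at (f : R -> R -> V3) (u v : R) : Prop := ~ immersion_at f u v.

Definition front_at (f : R -> R -> V3) (n : R -> R -> V3) (u v : R) : Prop :=
  immersion_at (fun x y => (f x y, n x y)) u v.

From Stdlib Require Import Reals Lra.
From Coquelicot Require Import Coquelicot.
Open Scope R_scope.

(* At a point where df = 0 the partial derivatives of (f, n) are (0, n_u) and (0, n_v),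
   so f is a front there iff n_u and n_v are independent.  Write n = m / |m| with
   m = (g1 + g2, -g1 + g2, 1 + g1 g2).  The derivative of m / |m| in a direction m' is the
   component of m' / |m| orthogonal to m, so n_u and n_v are independent iff
   (g1)_u (g2)_v <> 0 and no nontrivial combination s m_a + t m_b of the partial
   derivatives of m is parallel to m.  Solving s m_a + t m_b = c m forces s = c g1,
   t = c g2 and c (g1 g2 - 1) = 0, which has a nontrivial solution exactly when g1 g2 = 1.
   Part (i) is read off the first two coordinates of the Weierstrass integrands. *)

Section ProductDerivatives.

Context {V W : NormedModule R_AbsRing}.

Lemma is_derive_fst (F : R -> prod_NormedModule R_AbsRing V W) x l :
  is_derive F x l -> is_derive (fun y => fst (F y)) x (fst l).
Proof.
  intros H; unfold is_derive in *; eapply filterdiff_ext_lin.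
  - apply (filterdiff_comp' F fst x _ fst H), filterdiff_linear, is_linear_fst.
  - reflexivity.
Qed.

Lemma is_derive_snd (F : R -> prod_NormedModule R_AbsRing V W) x l :
  is_derive F x l -> is_derive (fun y => snd (F y)) x (snd l).
Proof.
  intros H; unfold is_derive in *; eapply filterdiff_ext_lin.
  - apply (filterdiff_comp' F snd x _ snd H), filterdiff_linear, is_linear_snd.
  - reflexivity.
Qed.

Lemma is_derive_pair (f : R -> V) (g : R -> W) x a b :
  is_derive f x a -> is_derive g x b ->
  @is_derive _ (prod_NormedModule R_AbsRing V W) (fun y => (f y, g y)) x (a, b).
Proof.
  intros Ha Hb; unfold is_derive in *; eapply filterdiff_ext_lin.
  - apply (filterdiff_comp'_2 f g pair x _ _ pair Ha Hb).
    apply (filterdiff_ext (fun t => t)); [now intros [p q]|].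
    eapply filterdiff_ext_lin; [apply filterdiff_id | now intros [p q]].
  - reflexivity.
Qed.

End ProductDerivatives.

(* Coquelicot proves uniqueness of derivatives only for real-valued functions. *)
Definition derivative_unique (V : NormedModule R_AbsRing) : Prop :=
  forall (F : R -> V) x l l', is_derive F x l -> is_derive F x l' -> l = l'.

Lemma derivative_unique_R : derivative_unique R_NormedModule.
Proof.
  intros F x l l' H H'.
  now rewrite <- (is_derive_unique F x l H), <- (is_derive_unique F x l' H').
Qed.

Lemma derivative_unique_prod (V W : NormedModule R_AbsRing) :
  derivative_unique V -> derivative_unique W ->
  derivative_unique (prod_NormedModule R_AbsRing V W).
Proof.
  intros HV HW F x [l1 l2] [l1' l2'] H H'; f_equal.
  - exact (HV _ x _ _ (is_derive_fst F x _ H) (is_derive_fst F x _ H')).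
  - exact (HW _ x _ _ (is_derive_snd F x _ H) (is_derive_snd F x _ H')).
Qed.

Lemma derivative_unique_V3 :
  derivative_unique
    (prod_NormedModule R_AbsRing
       (prod_NormedModule R_AbsRing R_NormedModule R_NormedModule) R_NormedModule).
Proof. repeat apply derivative_unique_prod; apply derivative_unique_R. Qed.

Lemma immersion_at_iff {V : NormedModule R_AbsRing} (F : R -> R -> V) u v a b :
  derivative_unique V -> has_du F u v a -> has_dv F u v b ->
  (immersion_at F u v <-> lin_indep a b).
Proof.
  intros HV Ha Hb; split.
  - intros (a' & b' & Ha' & Hb' & Hab).
    now rewrite (HV _ u _ _ Ha Ha'), (HV _ v _ _ Hb Hb').
  - intros Hab; now exists a, b.
Qed.

Lemma lin_indep_scal {V : ModuleSpace R_Ring} (c e : R) (x y : V) :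
  lin_indep (scal c x) (scal e y) <-> c <> 0 /\ e <> 0 /\ lin_indep x y.
Proof.
  split.
  - intros H.
    assert (Hc : c <> 0).
    { intros ->; destruct (H 1 0) as [H1 _]; [|lra].
      now rewrite !(scal_zero_l : forall u : V, scal 0 u = zero), scal_zero_r, plus_zero_l. }
    assert (He : e <> 0).
    { intros ->; destruct (H 0 1) as [_ H1]; [|lra].
      now rewrite !(scal_zero_l : forall u : V, scal 0 u = zero), scal_zero_r, plus_zero_l. }
    split; [exact Hc | split; [exact He |]].
    intros s t Hst; destruct (H (s / c) (t / e)) as [Hs Ht].
    + rewrite !scal_assoc; unfold mult; simpl.
      replace (s / c * c) with s by (field; exact Hc).
      now replace (t / e * e) with t by (field; exact He).
    + split; [replace s with (s / c * c) by (field; exact Hc)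
             | replace t with (t / e * e) by (field; exact He)];
        rewrite ?Hs, ?Ht; ring.
  - intros (Hc & He & H) s t Hst.
    rewrite !scal_assoc in Hst; destruct (H _ _ Hst) as [Hs Ht].
    split; [apply (Rmult_integral s c) in Hs | apply (Rmult_integral t e) in Ht]; tauto.
Qed.

Lemma lin_indep_pair_zero {V W : NormedModule R_AbsRing} (x y : W) :
  lin_indep ((zero, x) : prod_NormedModule R_AbsRing V W) (zero, y) <-> lin_indep x y.
Proof.
  assert (Hcomb : forall s t : R,
    plus (scal s ((zero, x) : prod_NormedModule R_AbsRing V W)) (scal t (zero, y))
    = (zero, plus (scal s x) (scal t y))).
  { intros s t; apply injective_projections; simpl; [|reflexivity].
    transitivity (plus (zero : V) zero);
      [f_equal; exact (scal_zero_r (V := V) _) | apply plus_zero_l]. }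
  split; intros H s t Hst; apply H.
  - now rewrite Hcomb, Hst.
  - rewrite Hcomb in Hst; now injection Hst.
Qed.

Lemma mkV3_ext (x1 x2 x3 y1 y2 y3 : R) :
  x1 = y1 -> x2 = y2 -> x3 = y3 -> mkV3 x1 x2 x3 = mkV3 y1 y2 y3.
Proof. now intros -> -> ->. Qed.

Ltac V3_coords :=
  repeat match goal with v : V3 |- _ => destruct v as [[? ?] ?] end;
  cbn in *; repeat progress (unfold prod_plus, prod_scal, prod_opp, prod_zero in *; cbn in *).

Definition dot3 (x y : V3) : R :=
  fst (fst x) * fst (fst y) + snd (fst x) * snd (fst y) + snd x * snd y.
Definition perp (m v : V3) : V3 := minus v (scal (dot3 m v / dot3 m m) m).
Definition unit3 (m : V3) : V3 := scal (/ sqrt (dot3 m m)) m.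
Definition dunit3 (m v : V3) : V3 := scal (/ sqrt (dot3 m m)) (perp m v).

Lemma dot3_self_pos (m : V3) : m <> zero -> 0 < dot3 m m.
Proof.
  intros Hm; destruct m as [[m1 m2] m3]; unfold dot3; simpl.
  destruct (Req_dec m1 0), (Req_dec m2 0), (Req_dec m3 0); try nra.
  subst; now contradict Hm.
Qed.

Lemma perp_lin (m x y : V3) (s t : R) :
  plus (scal s (perp m x)) (scal t (perp m y)) = perp m (plus (scal s x) (scal t y)).
Proof. unfold perp, dot3; V3_coords; apply mkV3_ext; unfold Rdiv; ring. Qed.

Lemma perp_eq_zero (m v : V3) : m <> zero -> (perp m v = zero <-> exists c : R, v = scal c m).
Proof.
  intros Hm; pose proof (dot3_self_pos m Hm) as Hpos; split.
  - intros H; exists (dot3 m v / dot3 m m).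
    unfold perp, dot3 in *; V3_coords; injection H; intros.
    apply mkV3_ext; lra.
  - intros [c ->]; unfold perp, dot3 in *; V3_coords; apply mkV3_ext; field; lra.
Qed.

Lemma lin_indep_perp (m x y : V3) :
  m <> zero ->
  lin_indep (perp m x) (perp m y) <->
  (forall s t c : R, plus (scal s x) (scal t y) = scal c m -> s = 0 /\ t = 0).
Proof.
  intros Hm; split.
  - intros H s t c Hc; apply H.
    rewrite perp_lin; apply (perp_eq_zero _ _ Hm); now exists c.
  - intros H s t Hst; rewrite perp_lin in Hst.
    destruct (proj1 (perp_eq_zero _ _ Hm) Hst) as [c Hc]; exact (H s t c Hc).
Qed.

Lemma is_derive_scal_fct {V : NormedModule R_AbsRing} (f : R -> R) (g : R -> V) x df dg :
  is_derive f x df -> is_derive g x dg ->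
  is_derive (fun y => scal (f y) (g y)) x (plus (scal df (g x)) (scal (f x) dg)).
Proof.
  intros Hf Hg; unfold is_derive in *; eapply filterdiff_ext_lin.
  - exact (filterdiff_scal_fct x f g _ _ Rmult_comm Hf Hg).
  - intros t; rewrite scal_distr_l, !scal_assoc; unfold mult; simpl.
    now rewrite (Rmult_comm (f x) t).
Qed.

Lemma is_derive_Rmult (f g : R -> R) x df dg :
  is_derive f x df -> is_derive g x dg ->
  is_derive (fun y => f y * g y) x (df * g x + f x * dg).
Proof. intros Hf Hg; apply (is_derive_mult f g); auto; exact Rmult_comm. Qed.

Lemma is_derive_dot3_self (m : R -> V3) x (m' : V3) :
  is_derive m x m' -> is_derive (fun y => dot3 (m y) (m y)) x (2 * dot3 (m x) m').
Proof.
  intros Hm.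
  pose proof (is_derive_fst _ _ _ (is_derive_fst _ _ _ Hm)) as H1.
  pose proof (is_derive_snd _ _ _ (is_derive_fst _ _ _ Hm)) as H2.
  pose proof (is_derive_snd _ _ _ Hm) as H3.
  assert (E : 2 * dot3 (m x) m' =
    fst (fst m') * fst (fst (m x)) + fst (fst (m x)) * fst (fst m')
    + (snd (fst m') * snd (fst (m x)) + snd (fst (m x)) * snd (fst m'))
    + (snd m' * snd (m x) + snd (m x) * snd m')) by (unfold dot3; ring).
  rewrite E; unfold dot3.
  apply @is_derive_plus; [apply @is_derive_plus|]; now apply is_derive_Rmult.
Qed.

Lemma is_derive_unit3 (m : R -> V3) x (m' : V3) :
  is_derive m x m' -> m x <> zero ->
  is_derive (fun y => unit3 (m y)) x (dunit3 (m x) m').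
Proof.
  intros Hm Hmx; pose proof (dot3_self_pos _ Hmx) as Hpos.
  pose proof (sqrt_lt_R0 _ Hpos) as Hsqrt.
  set (d := sqrt (dot3 (m x) (m x))) in Hsqrt.
  unfold unit3; replace (dunit3 (m x) m') with
    (plus (scal (- (2 * dot3 (m x) m' / (2 * d)) / d ^ 2) (m x)) (scal (/ d) m')).
  - apply (is_derive_scal_fct (fun y => / sqrt (dot3 (m y) (m y))) m); [|exact Hm].
    apply (is_derive_inv (fun y => sqrt (dot3 (m y) (m y)))); [|exact (Rgt_not_eq _ _ Hsqrt)].
    apply (is_derive_sqrt (fun y => dot3 (m y) (m y))); [|exact Hpos].
    exact (is_derive_dot3_self m x m' Hm).
  - subst d; rewrite pow2_sqrt by lra; unfold dunit3, perp.
    generalize (m x) Hpos Hsqrt; intros mx; unfold dot3; V3_coords; intros.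
    apply mkV3_ext; field; lra.
Qed.

Lemma lin_indep_dunit3 (m x y : V3) :
  m <> zero ->
  lin_indep (dunit3 m x) (dunit3 m y) <->
  (forall s t c : R, plus (scal s x) (scal t y) = scal c m -> s = 0 /\ t = 0).
Proof.
  intros Hm; unfold dunit3; rewrite lin_indep_scal, <- lin_indep_perp by exact Hm.
  assert (Hk : / sqrt (dot3 m m) <> 0)
    by (apply Rinv_neq_0_compat, Rgt_not_eq, sqrt_lt_R0, dot3_self_pos, Hm).
  tauto.
Qed.

Definition normal_dir (a b : R) : V3 := mkV3 (a + b) (- a + b) (1 + a * b).

Lemma normal_dir_neq0 (a b : R) : normal_dir a b <> zero.
Proof. intros H; injection H; cbn; intros; nra. Qed.

Lemma normal_W_unit3 (g1 g2 : R -> R) (x y : R) :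
  normal_W g1 g2 x y = unit3 (normal_dir (g1 x) (g2 y)).
Proof.
  unfold normal_W, unit3, normal_dir, dot3; cbv zeta.
  replace ((1 - g1 x * g2 y) ^ 2 + 2 * (g1 x + g2 y) ^ 2) with
    ((g1 x + g2 y) * (g1 x + g2 y) + (- g1 x + g2 y) * (- g1 x + g2 y)
     + (1 + g1 x * g2 y) * (1 + g1 x * g2 y)) by ring.
  V3_coords; apply mkV3_ext; unfold Rdiv; ring.
Qed.

Lemma is_derive_normal_dir_l (a b : R) :
  is_derive (fun x => normal_dir x b) a (mkV3 1 (-1) b).
Proof.
  unfold normal_dir, mkV3; apply is_derive_pair; [apply is_derive_pair|];
    auto_derive; auto; ring.
Qed.

Lemma is_derive_normal_dir_r (a b : R) :
  is_derive (fun y => normal_dir a y) b (mkV3 1 1 a).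
Proof.
  unfold normal_dir, mkV3; apply is_derive_pair; [apply is_derive_pair|];
    auto_derive; auto; ring.
Qed.

Lemma lin_indep_normal_derivs (a b : R) :
  lin_indep (dunit3 (normal_dir a b) (mkV3 1 (-1) b)) (dunit3 (normal_dir a b) (mkV3 1 1 a))
  <-> a * b <> 1.
Proof.
  rewrite lin_indep_dunit3 by apply normal_dir_neq0; unfold normal_dir; split.
  - intros H Hab; destruct (H a b 1) as [-> ->]; [|lra].
    V3_coords; apply mkV3_ext; lra.
  - intros Hab s t c Hst; V3_coords; injection Hst; intros E3 E2 E1.
    assert (Hs : s = c * a) by lra; assert (Ht : t = c * b) by lra; subst s t.
    assert (Hc : c * (a * b - 1) = 0) by lra.
    destruct (Rmult_integral _ _ Hc) as [-> | H]; [split; ring | lra].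
Qed.

Lemma smooth_on_is_derive (U : R -> Prop) (h : R -> R) (x : R) :
  smooth_on U h -> U x -> is_derive h x (Derive h x).
Proof. intros Hh Hx; apply Derive_correct, (Hh 1%nat x Hx). Qed.

Lemma has_du_normal_W (I : R -> Prop) (g1 g2 : R -> R) (u v : R) :
  smooth_on I g1 -> I u ->
  has_du (normal_W g1 g2) u v
    (scal (Derive g1 u) (dunit3 (normal_dir (g1 u) (g2 v)) (mkV3 1 (-1) (g2 v)))).
Proof.
  intros Hg1 Iu; unfold has_du.
  apply (is_derive_ext (fun x => unit3 (normal_dir (g1 x) (g2 v))));
    [intros x; symmetry; apply normal_W_unit3|].
  apply (is_derive_comp (fun a => unit3 (normal_dir a (g2 v))) g1).
  - apply (is_derive_unit3 (fun a => normal_dir a (g2 v)));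
      [apply is_derive_normal_dir_l | apply normal_dir_neq0].
  - exact (smooth_on_is_derive I g1 u Hg1 Iu).
Qed.

Lemma has_dv_normal_W (J : R -> Prop) (g1 g2 : R -> R) (u v : R) :
  smooth_on J g2 -> J v ->
  has_dv (normal_W g1 g2) u v
    (scal (Derive g2 v) (dunit3 (normal_dir (g1 u) (g2 v)) (mkV3 1 1 (g1 u)))).
Proof.
  intros Hg2 Jv; unfold has_dv.
  apply (is_derive_ext (fun y => unit3 (normal_dir (g1 u) (g2 y))));
    [intros y; symmetry; apply normal_W_unit3|].
  apply (is_derive_comp (fun b => unit3 (normal_dir (g1 u) b)) g2).
  - apply (is_derive_unit3 (fun b => normal_dir (g1 u) b));
      [apply is_derive_normal_dir_r | apply normal_dir_neq0].
  - exact (smooth_on_is_derive J g2 v Hg2 Jv).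
Qed.

Lemma fu_W_eq_zero (g1 w1 : R -> R) (u : R) : fu_W g1 w1 u = zero <-> w1 u = 0.
Proof.
  unfold fu_W; split.
  - intros H; injection H; cbn; intros; lra.
  - intros Hw; rewrite Hw; V3_coords; apply mkV3_ext; field.
Qed.

Lemma fv_W_eq_zero (g2 w2 : R -> R) (v : R) : fv_W g2 w2 v = zero <-> w2 v = 0.
Proof.
  unfold fv_W; split.
  - intros H; injection H; cbn; intros; lra.
  - intros Hw; rewrite Hw; V3_coords; apply mkV3_ext; field.
Qed.

Lemma df_zero_iff_W (f : R -> R -> V3) (g1 w1 g2 w2 : R -> R) (u v : R) :
  has_du f u v (fu_W g1 w1 u) -> has_dv f u v (fv_W g2 w2 v) ->
  (df_zero f u v <-> w1 u = 0 /\ w2 v = 0).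
Proof.
  intros Hu Hv; split.
  - intros [H0u H0v]; split; [apply (fu_W_eq_zero g1) | apply (fv_W_eq_zero g2)];
      eapply derivative_unique_V3; eassumption.
  - intros [Hw1 Hw2]; split.
    + rewrite (proj2 (fu_W_eq_zero g1 w1 u) Hw1) in Hu; exact Hu.
    + rewrite (proj2 (fv_W_eq_zero g2 w2 v) Hw2) in Hv; exact Hv.
Qed.

Lemma front_at_iff_W (I J : R -> Prop) (g1 g2 : R -> R) (f : R -> R -> V3) (u v : R) :
  smooth_on I g1 -> smooth_on J g2 -> I u -> J v -> df_zero f u v ->
  (front_at f (normal_W g1 g2) u v <->
     g1 u * g2 v <> 1 /\ Derive g1 u * Derive g2 v <> 0).
Proof.
  intros Hg1 Hg2 Iu Jv [H0u H0v]; unfold front_at.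
  rewrite (immersion_at_iff _ u v
    (zero, scal (Derive g1 u) (dunit3 (normal_dir (g1 u) (g2 v)) (mkV3 1 (-1) (g2 v))))
    (zero, scal (Derive g2 v) (dunit3 (normal_dir (g1 u) (g2 v)) (mkV3 1 1 (g1 u))))).
  - rewrite lin_indep_pair_zero, lin_indep_scal, lin_indep_normal_derivs.
    split; [intros (Hd1 & Hd2 & Hab) | intros (Hab & Hd)].
    + split; [exact Hab | now apply Rmult_integral_contrapositive].
    + destruct (Rmult_neq_0_reg _ _ Hd); tauto.
  - apply derivative_unique_prod; apply derivative_unique_V3.
  - apply is_derive_pair; [exact H0u | exact (has_du_normal_W I g1 g2 u v Hg1 Iu)].
  - apply is_derive_pair; [exact H0v | exact (has_dv_normal_W J g1 g2 u v Hg2 Jv)].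
Qed.

Theorem lemma4p10 (I J : R -> Prop) (g1 w1 g2 w2 : R -> R) (f : R -> R -> V3) :
  gen_timelike_minimal_W I J g1 w1 g2 w2 f ->
  (forall u v, I u -> J v -> (df_zero f u v <-> w1 u = 0 /\ w2 v = 0)) /\
  (forall u v, I u -> J v -> singular_at f u v -> df_zero f u v ->
     (front_at f (normal_W g1 g2) u v <->
        g1 u * g2 v <> 1 /\ Derive g1 u * Derive g2 v <> 0)).
Proof.
  intros (_ & _ & Hg1 & _ & Hg2 & _ & Hder & _); split.
  - intros u v Iu Jv; destruct (Hder u v Iu Jv) as [Hu Hv].
    exact (df_zero_iff_W f g1 w1 g2 w2 u v Hu Hv).
  - intros u v Iu Jv _ Hdf; exact (front_at_iff_W I J g1 g2 f u v Hg1 Hg2 Iu Jv Hdf).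
Qed.
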